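(* For all integers $i\ge0$, $j\ge0$, $n\ge0$ and $k\ge1$, $$\sum_{\substack{C\in\mathcal R_{\rm dec}:\ \|C\|=i+1,\ d_{j+1}=1\\ \nu_{j+1}(C)=n,\ b(C)=j+1}}\hat a_C\,\omega_{\hat C}\;=\;\sum_{\substack{C\in\mathcal R_{\rm dec}:\ \|C\|=i+k,\ d_{j+1}=k\\ \nu_{j+1}(C)=n,\ b(C)=j+1}}\hat a_C\,\omega_{\hat C}.$$
   Context: Fix a commutative $\mathbb Q$-algebra $A$, an integer $s$, and elements $a_{k,i}\in A$ ($k\ge1$, $i\ge0$). For $y$ and $n\ge0$, $\binom{y}{n}=y(y-1)\cdots(y-n+1)/n!$. Chord diagrams. A rooted chord diagram of size $n$ is a fixed-point-free involution $C$ of $\{1,\dots,2n\}$, viewed as $n$ chords (transpositions) $(x\,y)$ with $x<y$; the chord containing $1$ is the root chord; $|C|=n$. Chords $(x\,y),(x'\,y')$ cross if $x<x'<y<y'$ or $x'<x<y'<y$. $C$ is connected if the graph whose vertices are the chords, with edges joining crossing chords, is connected. For a set of $m$ chords with $2m$ distinct positive integer endpoints, $\mathrm{norm}$ of it is the chord diagram on $\{1,\dots,2m\}$ obtained by replacing each endpoint by its rank among the $2m$ endpoints. Intersection order. The chords of a rooted connected chord diagram of size $n$ are labeled $1,\dots,n$ recursively: the root chord gets the first available label; the remaining chords split into connected components (w.r.t. crossing); the components are processed in increasing order of their smallest endpoint, each regarded as a rooted connected chord diagram rooted at its chord with smallest endpoint and labeled recursively with the next block of consecutive labels. ''Chord $i$''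 means the chord with label $i$. Terminal and base chords. Chord $i$ is terminal if it crosses no chord $j$ with $j>i$. If $t_0<t_1<\dots<t_m$ are the terminal labels, the base chord is $b(C)=t_0$. Insertion of chord diagrams. For $C$ of size $n$ with chords $(x_1y_1),\dots,(x_ny_n)$, root $(x_1y_1)$ ($x_1=1$), $D$ of size $m$ with chords $(x'_iy'_i)$, and $1\le k\le 2m-1$, $C\circ_kD$ is the chord diagram of size $n+m$ with chords $(1,y_1+k)$, $(x_i+k,y_i+k)$ ($2\le i\le n$), $(H(x'_i),H(y'_i))$ ($1\le i\le m$), where $H(x)=x+1$ if $x\le k$ and $H(x)=x+2n$ otherwise. Root share decomposition. For rooted connected $C$ with $|C|\ge2$, let $C_1$ be the connected component (of the chords other than the root) having the smallest endpoint among such components. There is a unique $i$ with $C=C'\circ_iC''$, where $C'=\mathrm{norm}(C\setminus C_1)$, $C''=\mathrm{norm}(C_1)$. Trees. Trees are rooted plane binary trees (every non-leaf vertex has a left and a right child) with labeled leaves. For such $T,T'$ with $T'$ having $\ell$ leaves and $1\le k\le2\ell-1$: add a virtual edge above the root of $T'$, number it $1$, and number the other $2\ell-2$ edges $2,3,\dots$ in pre-order of their lower endpoints (left subtree before right). $T\circ_kT'$ is obtained by subdividing edge $k$ of $T'$ by a new vertex $v$, making the part of $T'$ below edge $k$ the right subtree of $v$ and $T$ the left subtree of $v$; leaf labels are kept. Insertion tree. If $|C|=1$, $T(C)$ is a single vertex labeled by the label of its chord; if $|C|\ge2$ with root share decomposition $C=C'\circ_iC''$, then $T(C)=T(C')\circ_iT(C'')$,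 where the leaves of $T(C'),T(C'')$ carry the intersection-order labels in $C$ of the corresponding chords. Branch-left vector. For a leaf $v$, $\nu_v$ is the number of edges in the path starting at $v$ and repeatedly moving to the parent as long as the current vertex is a right child. $\nu_i(C)$ is $\nu_v$ for the leaf $v$ of $T(C)$ labeled $i$. Decorations. A decorated chord diagram is a rooted connected chord diagram with a positive integer $d_i$ on each chord $i$; $\|C\|=\sum_id_i$; $\mathcal R_{\rm dec}$ is the set of all of them. Weight and monomial. $\omega_{\hat C}=\prod_{i\ne b(C)}\binom{sd_i+\nu_i(C)-2}{\nu_i(C)}$. With terminal labels $t_0<\dots<t_m$, $\hat a_C=\prod_{c=1}^m a_{d_{t_c},t_c-t_{c-1}}\cdot\prod_{i\text{ non-terminal}}a_{d_i,0}$. *)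

From HB Require Import structures.
From mathcomp Require Import all_boot all_order all_algebra all_fingroup.
Set Implicit Arguments. Unset Strict Implicit. Unset Printing Implicit Defensive.
Import Order.TTheory GRing.Theory Num.Theory.

(** * Chords.  A chord is a pair (x, y) of endpoints with x < y. *)
Definition chord := (nat * nat)%type.

Definition crossb (c c' : chord) : bool :=
  [&& c.1 < c'.1, c'.1 < c.2 & c.2 < c'.2] || [&& c'.1 < c.1, c.1 < c'.2 & c'.2 < c.2].

Fixpoint closure_iter (f : nat) (S X : seq chord) : seq chord :=
  if f is f'.+1 then closure_iter f' S [seq c <- S | (c \in X) || has (crossb c) X]
  else X.

Definition component (S : seq chord) (c : chord) : seq chord :=
  closure_iter (size S) S [:: c].

(** Chord lists are kept sorted by left endpoint; then the head of a list is
    the chord with smallest endpoint. [comps f S] lists the connected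
    components of S in increasing order of their smallest endpoint. *)
Fixpoint comps (f : nat) (S : seq chord) : seq (seq chord) :=
  if f is f'.+1 then
    (if S is c :: _ then
       let K := component S c in K :: comps f' [seq x <- S | x \notin K]
     else [::])
  else [::].

Definition connectedb (S : seq chord) : bool :=
  if S is c :: _ then all (fun x => x \in component S c) S else false.

(** Intersection order: the list of chords, chord with label l at position l-1. *)
Fixpoint iorder (f : nat) (S : seq chord) : seq chord :=
  if f is f'.+1 then
    (if S is c :: S' then c :: flatten [seq iorder f' K | K <- comps (size S') S']
     else [::])
  else [::].

Definition label (L : seq chord) (c : chord) : nat := (index c L).+1.

Definition terminals (L : seq chord) : seq nat :=
  [seq i <- iota 1 (size L) | ~~ has (crossb (nth (0, 0) L i.-1)) (drop i L)].
Definition base (L : seq chord) : nat := head 0 (terminals L).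

Definition endpoints (S : seq chord) : seq nat := flatten [seq [:: c.1; c.2] | c <- S].
Definition rank (S : seq chord) (x : nat) : nat := (count (fun y => y < x) (endpoints S)).+1.
Definition normc (S : seq chord) : seq chord := [seq (rank S c.1, rank S c.2) | c <- S].

(** Insertion C o_k D of chord diagrams (C normalised, root = head of C). *)
Definition insc (C : seq chord) (k : nat) (D : seq chord) : seq chord :=
  let n := size C in
  let H x := if x <= k then x.+1 else x + n.*2 in
  match C with
  | r :: C' => (1, r.2 + k) :: [seq (c.1 + k, c.2 + k) | c <- C'] ++ [seq (H c.1, H c.2) | c <- D]
  | [::] => [::]
  end.

Inductive tree := Leaf of nat | Node of tree & tree.

Fixpoint tsize (t : tree) : nat :=
  match t with Leaf _ => 1 | Node l r => (tsize l + tsize r).+1 end.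

(** [graft0 T k t]: subdivide the edge above the vertex of preorder index k
    (0-based) of t, with T as new left subtree. *)
Fixpoint graft0 (T : tree) (k : nat) (t : tree) {struct t} : tree :=
  match t with
  | Leaf _ => if k == 0 then Node T t else t
  | Node l r =>
      if k is k'.+1 then
        (if k' < tsize l then Node (graft0 T k' l) r else Node l (graft0 T (k' - tsize l) r))
      else Node T t
  end.

(** T o_k T' : edge k of T' (edge 1 = virtual edge above the root, others
    numbered by preorder of their lower endpoints) = edge above the vertex
    of preorder index k (1-based). *)
Definition graft (T : tree) (k : nat) (T' : tree) : tree := graft0 T k.-1 T'.

(** Branch-left values of the leaves: pairs (leaf label, nu). *)
Fixpoint nuleaves (t : tree) (acc : nat) : seq (nat * nat) :=
  match t with
  | Leaf a => [:: (a, acc)]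
  | Node l r => nuleaves l 0 ++ nuleaves r acc.+1
  end.
Definition nuv (t : tree) (i : nat) : nat :=
  head 0 [seq p.2 | p <- nuleaves t 0 & p.1 == i].

(** Insertion tree, by the root share decomposition; L is the intersection
    order of the whole diagram (used for leaf labels). *)
Fixpoint itree (f : nat) (L S : seq chord) : tree :=
  if f is f'.+1 then
    match S with
    | [:: c] => Leaf (label L c)
    | c :: S' =>
        let C1 := head [::] (comps (size S') S') in
        let S2 := [seq x <- S | x \notin C1] in
        let k := head 0 [seq k <- iota 1 (size C1).*2.-1
                          | perm_eq (normc S) (insc (normc S2) k (normc C1))] in
        graft (itree f' L S2) k (itree f' L C1)
    | [::] => Leaf 0
    end
  else Leaf 0.

(** * Chord diagrams as fixed-point-free involutions of {1..2m}
    (represented on 'I_(2m) = {0..2m-1}, shifted by one). *)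
Definition fpf_inv (m : nat) (p : {perm 'I_m}) : bool :=
  [forall x, (p (p x) == x) && (p x != x)].

Definition chords_of (m : nat) (p : {perm 'I_(m.*2)}) : seq chord :=
  [seq ((val x).+1, (val (p x)).+1) | x <- enum 'I_(m.*2) & val x < val (p x)].

Definition rcd (m : nat) (p : {perm 'I_(m.*2)}) : bool :=
  fpf_inv p && connectedb (chords_of p).

Definition diag_order (m : nat) (p : {perm 'I_(m.*2)}) : seq chord :=
  iorder (size (chords_of p)) (chords_of p).
Definition diag_tree (m : nat) (p : {perm 'I_(m.*2)}) : tree :=
  itree (size (chords_of p)) (diag_order p) (chords_of p).

Definition nu (m : nat) (p : {perm 'I_(m.*2)}) (i : nat) : nat := nuv (diag_tree p) i.

(** Decorations: d : 'I_m -> values, chord with label l gets d (l-1). *)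
Definition decs (m N : nat) (d : {ffun 'I_m -> 'I_N.+1}) : seq nat :=
  [seq val (d x) | x <- enum 'I_m].
Definition dd (ds : seq nat) (l : nat) : nat := nth 0 ds l.-1.

Definition binomr (y : rat) (n : nat) : rat :=
  ((\prod_(i < n) (y - i%:R)) / (n`!)%:R)%R.

Definition omega (s : int) (m : nat) (p : {perm 'I_(m.*2)}) (ds : seq nat) : rat :=
  let L := diag_order p in
  (\prod_(l <- iota 1 (size L) | l != base L)
     binomr ((s * (dd ds l)%:Z + (nu p l)%:Z - 2)%R%:~R) (nu p l))%R.

Definition ahat (A : comAlgType rat) (a : nat -> nat -> A) (m : nat)
  (p : {perm 'I_(m.*2)}) (ds : seq nat) : A :=
  let L := diag_order p in
  let ts := terminals L in
  ((\prod_(pr <- zip (behead ts) ts) a (dd ds pr.1) (pr.1 - pr.2)%N) *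
   (\prod_(l <- iota 1 (size L) | l \notin ts) a (dd ds l) 0%N))%R.

(** The sum over decorated diagrams C with ||C|| = N, d_{j+1} = k,
    nu_{j+1}(C) = n and b(C) = j+1.  Since every d_i >= 1, |C| <= ||C|| = N
    and each d_i <= N, so the sum is over a finite set, enumerated here. *)
Definition Ssum (A : comAlgType rat) (s : int) (a : nat -> nat -> A)
  (N j n k : nat) : A :=
  (\sum_(m < N.+1)
     \sum_(p : {perm 'I_(m.*2)} | rcd p)
       \sum_(d : {ffun 'I_m -> 'I_N.+1} |
              [&& [forall x, (0 < val (d x))%N], (\sum_x val (d x) == N)%N,
                  dd (decs d) j.+1 == k, nu p j.+1 == n & base (diag_order p) == j.+1])
         (omega s p (decs d) *: ahat a p (decs d)))%R.

From HB Require Import structures.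
From mathcomp Require Import all_boot all_order all_algebra all_fingroup.
Set Implicit Arguments. Unset Strict Implicit. Unset Printing Implicit Defensive.
Import Order.TTheory GRing.Theory Num.Theory.

(* Since b(C) = j+1, chord j+1 is the base chord t_0. Its decoration enters
   neither the weight (the product defining omega skips b(C)) nor the monomial
   (t_0 is terminal, and only t_1, ..., t_m carry a terminal factor). Hence
   resetting d_{j+1} from c to c' is a summand-preserving bijection between the
   decorated diagrams with ||C|| = M + c, d_{j+1} = c and those with
   ||C|| = M + c', d_{j+1} = c'; the other decorations are positive and sum to M,
   so the size of the diagram is at most M + 1 on both sides. *)

Lemma eq_big_bij (R : Type) (idx : R) (op : Monoid.com_law idx) (I J : finType)
    (P : pred I) (Q : pred J) (f : J -> I) (g : I -> J) (F : I -> R) (G : J -> R) :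
  (forall x, P x -> Q (g x) /\ f (g x) = x) ->
  (forall y, Q y -> P (f y) /\ g (f y) = y) ->
  (forall y, Q y -> F (f y) = G y) ->
  \big[op/idx]_(x | P x) F x = \big[op/idx]_(y | Q y) G y.
Proof.
move=> gK fK eqFG; rewrite (reindex_onto f g); last by move=> x /gK [].
apply: eq_big => [y|y /andP [Pfy /eqP fyK]].
  apply/andP/idP => [[Pfy /eqP <-]|Qy]; first by case: (gK _ Pfy).
  by case: (fK _ Qy) => -> ->.
by rewrite eqFG // -fyK; case: (gK _ Pfy).
Qed.
Arguments eq_big_bij {R idx op I J P Q} f g {F G}.

Lemma eq_big_zip (R : Type) (idx : R) (op : R -> R -> R) (S : eqType) (T : Type)
    (s : seq S) (t : seq T) (F G : S -> T -> R) :
  (forall x y, x \in s -> F x y = G x y) ->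
  \big[op/idx]_(pr <- zip s t) F pr.1 pr.2 = \big[op/idx]_(pr <- zip s t) G pr.1 pr.2.
Proof.
elim: s t => [|x s IHs] [|y t] eqFG; rewrite ?big_nil // !big_cons /=.
by rewrite eqFG ?mem_head // IHs // => x' y' sx'; rewrite eqFG // inE sx' orbT.
Qed.
Arguments eq_big_zip {R idx op S T s t} F G.

Lemma behead_terminals_gt_base (L : seq chord) l :
  l \in behead (terminals L) -> (base L < l)%N.
Proof.
have : sorted ltn (terminals L).
  by apply: sorted_filter; [exact: ltn_trans | exact: iota_ltn_sorted].
rewrite /base; case: (terminals L) => [|t ts] //= /(order_path_min ltn_trans).
by move/allP; apply.
Qed.

Lemma nonterminal_neq_base (L : seq chord) l :
  (0 < l)%N -> l \notin terminals L -> l != base L.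
Proof.
rewrite /base; case: (terminals L) => [|t ts] /=; first by rewrite -lt0n.
by move=> _; apply: contra => /eqP ->; rewrite mem_head.
Qed.

Section OffBase.
Variables (m : nat) (p : {perm 'I_(m.*2)}) (ds ds' : seq nat).
Hypothesis dd_off_base :
  forall l, (0 < l)%N -> l != base (diag_order p) -> dd ds l = dd ds' l.

Lemma omega_eq_off_base (s : int) : omega s p ds = omega s p ds'.
Proof.
rewrite /omega !(big_seq_cond (fun l => l != _)); apply: eq_bigr => l.
by rewrite mem_iota => /andP [/andP [l_gt0 _] l_base]; rewrite dd_off_base.
Qed.

Lemma ahat_eq_off_base (A : comAlgType rat) (a : nat -> nat -> A) :
  ahat a p ds = ahat a p ds'.
Proof.
rewrite /ahat; congr (_ * _)%R.
  apply: (eq_big_zip (fun l t => a (dd ds l) (l - t)%N)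
                     (fun l t => a (dd ds' l) (l - t)%N)) => l t.
  move/behead_terminals_gt_base => l_base /=.
  rewrite dd_off_base ?(gtn_eqF l_base) //; exact: leq_ltn_trans l_base.
rewrite !(big_seq_cond (fun l => l \notin _)); apply: eq_bigr => l.
rewrite mem_iota => /andP [/andP [l_gt0 _] l_term].
by rewrite dd_off_base ?nonterminal_neq_base.
Qed.

End OffBase.

Lemma nth_decs m N (d : {ffun 'I_m -> 'I_N.+1}) (x : 'I_m) :
  nth 0 (decs d) x = val (d x).
Proof. by rewrite /decs (nth_map x) ?size_enum_ord // nth_ord_enum. Qed.

Lemma nth_decs_default m N (d : {ffun 'I_m -> 'I_N.+1}) l :
  (m <= l)%N -> nth 0 (decs d) l = 0%N.
Proof. by move=> m_le_l; rewrite nth_default // size_map size_enum_ord. Qed.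

Definition set_dec (m N N' : nat) (j c : nat) (d : {ffun 'I_m -> 'I_N.+1}) :
  {ffun 'I_m -> 'I_N'.+1} :=
  [ffun x => if val x == j then inord c else inord (val (d x))].

Definition Ssum_cond (m N : nat) (j n c : nat) (p : {perm 'I_(m.*2)})
    (d : {ffun 'I_m -> 'I_N.+1}) : bool :=
  [&& [forall x, (0 < val (d x))%N], (\sum_x val (d x) == N)%N,
      dd (decs d) j.+1 == c, nu p j.+1 == n & base (diag_order p) == j.+1].

Definition Ssum_of_size (A : comAlgType rat) (s : int) (a : nat -> nat -> A)
    (N j n c m : nat) : A :=
  (\sum_(p : {perm 'I_(m.*2)} | rcd p)
     \sum_(d : {ffun 'I_m -> 'I_N.+1} | Ssum_cond j n c p d)
       (omega s p (decs d) *: ahat a p (decs d)))%R.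

Section SetDec.
Variables (j n m M c c' : nat) (p : {perm 'I_(m.*2)}).
Variable d : {ffun 'I_m -> 'I_(M + c).+1}.
Hypotheses (c_gt0 : (0 < c)%N) (c'_gt0 : (0 < c')%N).
Hypothesis d_cond : Ssum_cond j n c p d.

Lemma Ssum_cond_index_lt : (j < m)%N.
Proof.
case/and5P: d_cond => _ _ /eqP dd_j _ _; rewrite ltnNge; apply/negP => m_le_j.
by move: dd_j c_gt0; rewrite /dd nth_decs_default // => <-.
Qed.

Let j0 := Ordinal Ssum_cond_index_lt.

Lemma Ssum_cond_dec_at : val (d j0) = c.
Proof. by case/and5P: d_cond => _ _ /eqP dd_j _ _; rewrite -nth_decs. Qed.

Lemma Ssum_cond_sum_off : (\sum_(x | x != j0) val (d x))%N = M.
Proof.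
case/and5P: d_cond => _ /eqP; rewrite (bigD1 j0) //= Ssum_cond_dec_at.
by rewrite addnC => /addIn.
Qed.

Lemma Ssum_cond_dec_off_le x : x != j0 -> (val (d x) <= M)%N.
Proof.
by move=> x_j0; rewrite -[X in (_ <= X)%N]Ssum_cond_sum_off (bigD1 x) //= leq_addr.
Qed.

Lemma Ssum_cond_size_le : (m <= M.+1)%N.
Proof.
case/and5P: d_cond => /forallP d_gt0 _ _ _ _.
have : (\sum_(x | x != j0) 1 <= \sum_(x | x != j0) val (d x))%N.
  by apply: leq_sum => x _; exact: d_gt0.
rewrite sum1_card cardC1 card_ord Ssum_cond_sum_off -ltnS.
exact: leq_trans (leqSpred m).
Qed.

Lemma set_dec_val x :
  val (set_dec (M + c') j c' d x) = if x == j0 then c' else val (d x).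
Proof.
have val_j0 : (val x == j) = (x == j0) by [].
rewrite ffunE val_j0; case: ifP => [_|x_j0]; rewrite /= inordK //.
  by rewrite ltnS leq_addl.
by rewrite ltnS (leq_trans (Ssum_cond_dec_off_le (negbT x_j0))) ?leq_addr.
Qed.

Lemma Ssum_cond_set_dec : Ssum_cond j n c' p (set_dec (M + c') j c' d).
Proof.
case/and5P: d_cond => /forallP d_gt0 _ _ nu_j base_j; apply/and5P; split => //.
- by apply/forallP => x; rewrite set_dec_val; case: ifP.
- rewrite (bigD1 j0) //= set_dec_val eqxx.
  under eq_bigr => x x_j0 do rewrite set_dec_val (negbTE x_j0).
  by rewrite Ssum_cond_sum_off addnC.
- by rewrite /dd -[j]/(val j0) nth_decs set_dec_val eqxx.
Qed.

Lemma set_decK : set_dec (M + c) j c (set_dec (M + c') j c' d) = d.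
Proof.
apply/ffunP => x; apply: val_inj; rewrite ffunE -[val x == j]/(x == j0).
case: ifP => [/eqP ->|x_j0].
  by rewrite Ssum_cond_dec_at /= inordK // ltnS leq_addl.
by rewrite set_dec_val x_j0 inord_val.
Qed.

Lemma nth_decs_set_dec l :
  l != j -> nth 0 (decs (set_dec (M + c') j c' d)) l = nth 0 (decs d) l.
Proof.
move=> l_j; case: (ltnP l m) => [l_lt_m|m_le_l]; last by rewrite !nth_decs_default.
rewrite -[l]/(val (Ordinal l_lt_m)) !nth_decs set_dec_val.
by case: eqP => // /(congr1 val) /= l_eq; rewrite l_eq eqxx in l_j.
Qed.

End SetDec.

Section Shift.
Variables (A : comAlgType rat) (s : int) (a : nat -> nat -> A) (j n M : nat).

Lemma Ssum_of_size_shift c c' m : (0 < c)%N -> (0 < c')%N ->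
  Ssum_of_size s a (M + c) j n c m = Ssum_of_size s a (M + c') j n c' m.
Proof.
move=> c_gt0 c'_gt0; apply: eq_bigr => p _.
apply: (eq_big_bij (set_dec (M + c) j c) (set_dec (M + c') j c')) => d d_cond.
- by split; [apply: Ssum_cond_set_dec | apply: set_decK _ d_cond].
- by split; [apply: Ssum_cond_set_dec | apply: set_decK _ d_cond].
have dd_off_j l : (0 < l)%N -> l != j.+1 ->
    dd (decs (set_dec (M + c) j c d)) l = dd (decs d) l.
  move=> l_gt0 l_j; rewrite /dd (nth_decs_set_dec c c'_gt0 d_cond) //.
  by rewrite -(inj_eq succn_inj) prednK.
have /eqP base_j : base (diag_order p) == j.+1 by case/and5P: d_cond.
rewrite (omega_eq_off_base (ds' := decs d)) ?base_j //.
by rewrite (ahat_eq_off_base (ds' := decs d)) ?base_j.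
Qed.

Lemma Ssum_of_size_eq0 c m : (0 < c)%N -> (M.+1 < m)%N ->
  Ssum_of_size s a (M + c) j n c m = 0%R.
Proof.
move=> c_gt0 M_lt_m; apply: big1 => p _; apply: big1 => d d_cond.
by move: M_lt_m; rewrite ltnNge (Ssum_cond_size_le c_gt0 d_cond).
Qed.

Lemma Ssum_truncate c : (0 < c)%N ->
  Ssum s a (M + c) j n c = (\sum_(m < M.+2) Ssum_of_size s a (M + c) j n c m)%R.
Proof.
move=> c_gt0; rewrite (big_ord_widen (M + c).+1 (Ssum_of_size s a (M + c) j n c));
  last by rewrite !ltnS -addn1 leq_add2l.
rewrite [RHS]big_mkcond; apply: eq_bigr => m _.
by case: ltnP => // M_lt_m; exact: Ssum_of_size_eq0.
Qed.

Lemma Ssum_shift c c' : (0 < c)%N -> (0 < c')%N ->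
  Ssum s a (M + c) j n c = Ssum s a (M + c') j n c'.
Proof.
move=> c_gt0 c'_gt0; rewrite !Ssum_truncate //.
by apply: eq_bigr => m _; apply: Ssum_of_size_shift.
Qed.

End Shift.

Theorem mainTheorem7 (A : comAlgType rat) (s : int) (a : nat -> nat -> A)
  (i j n k : nat) :
  (1 <= k)%N -> Ssum s a (i + 1) j n 1 = Ssum s a (i + k) j n k.
Proof. exact: Ssum_shift. Qed.
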